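(* Let $\mathcal{A}\text{-Sch}$ be the category of $\mathcal{A}$-schemes over the algebraic system of rings, and let $\mathbf{LRCoh}$ be the category of locally ringed spaces whose underlying space is coherent, with morphisms the morphisms of locally ringed spaces whose underlying continuous map is quasi-compact. Then for every $\mathcal{A}$-scheme $(X,\mathcal{O}_X,\beta_X)$, the ringed space $(X,\mathcal{O}_X)$ is locally ringed, every morphism of $\mathcal{A}$-schemes is a morphism of locally ringed spaces, so $(X,\mathcal{O}_X,\beta_X)\mapsto(X,\mathcal{O}_X)$ defines a functor $\mathcal{A}\text{-Sch}\to\mathbf{LRCoh}$; moreover this functor is fully faithful.
   Context: All rings are commutative with $1$. A topological space is coherent if it is sober (every irreducible closed subset has a unique generic point), quasi-compact, quasi-separated (intersections of two quasi-compact opens are quasi-compact) and has a basis of quasi-compact opens; a continuous map of coherent spaces is quasi-compact if preimages of quasi-compact opens are quasi-compact. For a coherent space $U$, $C(U)_{\mathrm{cpt}}$ is the set of closed subsets of $U$ with quasi-compact complement. For a ring $R$, $\alpha_1(R)$ is the set of finitely generated ideals of $R$ modulo the equivalence relation generated by $I\cdot I\sim I$, and $\alpha_2(a)$ denotes the class of the principal ideal $(a)$. An $\mathcal{A}$-scheme is a triple $(X,\mathcal{O}_X,\beta_X)$ where $X$ is a coherent space, $\mathcal{O}_X$ is a sheaf of rings on $X$, and $\beta_X$ (the support morphism) is a family of maps $\beta_X:\alpha_1(\mathcal{O}_X(U))\to C(U)_{\mathrm{cpt}}$ for quasi-compact open $U$, compatible with restrictions, with $\beta_X(I+J)=\beta_X(I)\cap\beta_X(J)$,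 $\beta_X(IJ)=\beta_X(I)\cup\beta_X(J)$, $\beta_X(0)=U$, $\beta_X(\mathcal{O}_X(U))=\emptyset$; it must satisfy: whenever $V\subset U$ are quasi-compact open and $a\in\mathcal{O}_X(U)$ satisfies $\beta_X(\alpha_2(a))\subset U\setminus V$, then $a|_V$ is invertible in $\mathcal{O}_X(V)$ (''restrictions reflect localizations''). A morphism $f:X\to Y$ of $\mathcal{A}$-schemes is a pair $(|f|,f^{\#})$ where $|f|$ is a quasi-compact continuous map and $f^{\#}:\mathcal{O}_Y\to|f|_*\mathcal{O}_X$ is a morphism of sheaves of rings with $\beta_X(f^{\#}(I))=|f|^{-1}(\beta_Y(I))$ for all finitely generated ideals $I$ of sections of $\mathcal{O}_Y$ over quasi-compact opens. *)

From HB Require Import structures.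
From mathcomp Require Import all_boot all_order all_algebra.
From mathcomp Require Import all_classical topology.
Set Implicit Arguments. Unset Strict Implicit. Unset Printing Implicit Defensive.
Import Order.TTheory GRing.Theory.
Local Open Scope classical_set_scope.
Local Open Scope ring_scope.

Definition qc_open {X : topologicalType} (U : set X) : Prop := open U /\ compact U.

Definition irreducible_set {X : topologicalType} (Z : set X) : Prop :=
  Z !=set0 /\
  forall Z1 Z2 : set X, closed Z1 -> closed Z2 -> Z `<=` Z1 `|` Z2 ->
    Z `<=` Z1 \/ Z `<=` Z2.

Definition sober_space (X : topologicalType) : Prop :=
  forall Z : set X, closed Z -> irreducible_set Z ->
    exists! x : X, Z = closure [set x].

Definition coherent_space (X : topologicalType) : Prop :=
  [/\ sober_space X,
      compact [set: X],
      (forall U V : set X, qc_open U -> qc_open V -> compact (U `&` V)) &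
      (forall (U : set X) (x : X), open U -> U x ->
         exists V : set X, [/\ qc_open V, V x & V `<=` U])].

Definition qc_map {X Y : topologicalType} (f : X -> Y) : Prop :=
  forall V : set Y, qc_open V -> compact (f @^-1` V).

(* Sections are only meaningful on open sets; all axioms are restricted to opens. *)

Record sheaf (X : topologicalType) := Sheaf {
  sec : set X -> comPzRingType;
  res : forall U V : set X, V `<=` U -> {rmorphism sec U -> sec V};
  res_id : forall (U : set X) (h : U `<=` U) (s : sec U), open U -> res h s = s;
  res_comp : forall (U V W : set X) (hVU : V `<=` U) (hWV : W `<=` V)
      (hWU : W `<=` U) (s : sec U),
      open U -> open V -> open W -> res hWV (res hVU s) = res hWU s;
  sheaf_locality : forall (U : set X) (I : Type) (V : I -> set X)
      (hV : forall i, V i `<=` U),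
      open U -> (forall i, open (V i)) -> U `<=` \bigcup_i V i ->
      forall s t : sec U, (forall i, res (hV i) s = res (hV i) t) -> s = t;
  sheaf_gluing : forall (U : set X) (I : Type) (V : I -> set X)
      (hV : forall i, V i `<=` U),
      open U -> (forall i, open (V i)) -> U `<=` \bigcup_i V i ->
      forall s : forall i, sec (V i),
      (forall i j, res (@subIsetl _ (V i) (V j)) (s i)
                   = res (@subIsetr _ (V i) (V j)) (s j)) ->
      exists t : sec U, forall i, res (hV i) t = s i
}.

Definition is_unit {R : comPzRingType} (a : R) : Prop := exists b : R, a * b = 1.

Definition ideal_of_seq {R : comPzRingType} (s : seq R) : set R :=
  [set x | exists c : 'I_(size s) -> R, x = \sum_(i < size s) c i * s`_i].

Definition fg_ideal {R : comPzRingType} (I : set R) : Prop :=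
  exists s : seq R, I = ideal_of_seq s.

Definition principal_ideal {R : comPzRingType} (a : R) : set R := ideal_of_seq [:: a].

Definition ideal_add {R : comPzRingType} (I J : set R) : set R :=
  [set x | exists a b, [/\ I a, J b & x = a + b]].

Definition ideal_mul {R : comPzRingType} (I J : set R) : set R :=
  [set x | exists (n : nat) (a b : 'I_n -> R),
     (forall i, I (a i) /\ J (b i)) /\ x = \sum_(i < n) a i * b i].

Definition ideal_ext {R S : comPzRingType} (f : R -> S) (I : set R) : set S :=
  [set y | exists (n : nat) (c : 'I_n -> S) (a : 'I_n -> R),
     (forall i, I (a i)) /\ y = \sum_(i < n) c i * f (a i)].

Definition Ccpt {X : topologicalType} (U Z : set X) : Prop :=
  [/\ Z `<=` U, open (U `\` Z) & compact (U `\` Z)].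

(* beta U : a map defined on finitely generated ideals of O(U) (encoded as subsets
   of O(U)); it descends to alpha_1(O(U)) iff it is invariant under I ~ I.I *)
Definition support_data (X : topologicalType) (O : sheaf X) :=
  forall U : set X, set (sec O U) -> set X.

Definition is_AScheme (X : topologicalType) (O : sheaf X) (beta : support_data O)
  : Prop :=
  coherent_space X /\
      (forall U I, qc_open U -> fg_ideal I -> Ccpt U (beta U I)) /\
      (forall U I, qc_open U -> fg_ideal I -> beta U (ideal_mul I I) = beta U I) /\
      (forall (U V : set X) (h : V `<=` U) I, qc_open U -> qc_open V -> fg_ideal I ->
         beta V (ideal_ext (res O h) I) = beta U I `&` V) /\
      (forall U I J, qc_open U -> fg_ideal I -> fg_ideal J ->
         beta U (ideal_add I J) = beta U I `&` beta U J) /\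
      (forall U I J, qc_open U -> fg_ideal I -> fg_ideal J ->
         beta U (ideal_mul I J) = beta U I `|` beta U J) /\
      (forall U, qc_open U -> beta U [set 0] = U) /\
      (forall U, qc_open U -> beta U [set: sec O U] = set0) /\
      (forall (U V : set X) (h : V `<=` U) (a : sec O U), qc_open U -> qc_open V ->
         beta U (principal_ideal a) `<=` U `\` V -> is_unit (res O h a)).

(* the germ of s in O_{X,x} is a unit *)
Definition germ_unit {X : topologicalType} (O : sheaf X) (x : X) (U : set X)
  (s : sec O U) : Prop :=
  exists (V : set X) (h : V `<=` U), [/\ open V, V x & is_unit (res O h s)].

(* every stalk O_{X,x} is a local ring: nonzero, and for every germ s,
   s or 1 - s is a unit *)
Definition locally_ringed {X : topologicalType} (O : sheaf X) : Prop :=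
  forall x : X,
    (forall U : set X, open U -> U x -> (1 : sec O U) <> 0) /\
    (forall (U : set X) (s : sec O U), open U -> U x ->
       germ_unit x s \/ germ_unit x (1 - s)).

(* morphism data f^# : O_Y -> f_* O_X *)
Definition sheaf_map {X Y : topologicalType} (OX : sheaf X) (OY : sheaf Y)
  (f : X -> Y) :=
  forall V : set Y, {rmorphism sec OY V -> sec OX (f @^-1` V)}.

Definition ringed_morph {X Y : topologicalType} (OX : sheaf X) (OY : sheaf Y)
  (f : X -> Y) (fs : sheaf_map OX OY f) : Prop :=
  [/\ continuous f, qc_map f &
      forall (V V' : set Y) (h : V' `<=` V) (s : sec OY V), open V -> open V' ->
        res OX ((@preimage_subset _ _ f _ _ h)) (fs V s) = fs V' (res OY h s)].

(* the induced maps on stalks O_{Y,f x} -> O_{X,x} are local homomorphisms *)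
Definition local_on_stalks {X Y : topologicalType} (OX : sheaf X) (OY : sheaf Y)
  (f : X -> Y) (fs : sheaf_map OX OY f) : Prop :=
  forall (x : X) (V : set Y) (s : sec OY V), open V -> V (f x) ->
    germ_unit x (fs V s) -> germ_unit (f x) s.

Definition A_morph_cond {X Y : topologicalType} (OX : sheaf X) (OY : sheaf Y)
  (betaX : support_data OX) (betaY : support_data OY)
  (f : X -> Y) (fs : sheaf_map OX OY f) : Prop :=
  forall (V : set Y) (I : set (sec OY V)), qc_open V -> fg_ideal I ->
    betaX (f @^-1` V) (ideal_ext (fs V) I) = f @^-1` (betaY V I).

From HB Require Import structures.
From mathcomp Require Import all_boot all_order all_algebra.
From mathcomp Require Import all_classical topology.
Local Open Scope classical_set_scope.
Import GRing.Theory.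
Local Open Scope ring_scope.

(** In an A-scheme the support of a section a over a quasi-compact open U is
    exactly the set of points of U at which the germ of a is not a unit: if
    the germ is a unit on a quasi-compact neighbourhood W, then a generates the
    unit ideal over W and the support misses W; otherwise x lies outside the
    quasi-compact open U \ beta(a), on which a is invertible because
    restrictions reflect localizations.  Since beta turns sums of ideals into
    intersections, the support of (a_1, ..., a_n) is the set of points where
    no germ of an a_i is a unit.

    The stalk at x is local because the ideal
    (a, 1 - a) is the unit ideal, so its support is empty and one of the
    germs of a, 1 - a is a unit.  A morphism of ringed spaces pulls supports
    back iff the preimage of every germ that is a unit is a unit, i.e. iff it
    is local on stalks. *)

Section Ideals.
Context {R : comPzRingType}.
Implicit Types (a : R) (s : seq R).

Lemma ideal_of_seqP s x :
  ideal_of_seq s x <-> exists c : nat -> R, x = \sum_(i < size s) c i * s`_i.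
Proof.
split.
- move=> [c ->]; exists (fun k => if insub k is Some i then c i else 0).
  by apply: eq_bigr => i _; rewrite valK.
- by move=> [c ->]; exists (fun i => c i).
Qed.

Lemma ideal_of_seq_nil : ideal_of_seq [::] = [set 0 : R].
Proof.
apply/seteqP; split => x /=.
- by move=> [c ->]; rewrite big_ord0.
- by move=> ->; exists (fun _ => 0); rewrite big_ord0.
Qed.

Lemma ideal_of_seq_cons a s :
  ideal_of_seq (a :: s) = ideal_add (principal_ideal a) (ideal_of_seq s).
Proof.
apply/seteqP; split => x /=.
- move=> /ideal_of_seqP [c ->]; rewrite /= big_ord_recl /=.
  exists (c 0%N * a), (\sum_(i < size s) c i.+1 * s`_i); split.
  + by apply/ideal_of_seqP; exists (fun=> c 0%N); rewrite big_ord1.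
  + by apply/ideal_of_seqP; exists (fun k => c k.+1).
  + by congr (_ + _); apply: eq_bigr => i _; rewrite lift0.
- move=> [b [d [/ideal_of_seqP [c1 ->] /ideal_of_seqP [c2 ->] ->]]].
  apply/ideal_of_seqP; exists (fun k => if k is k'.+1 then c2 k' else c1 0%N).
  rewrite [RHS]big_ord_recl big_ord_recl big_ord0 addr0 /=.
  by congr (_ + _); apply: eq_bigr => i _; rewrite lift0.
Qed.

Lemma mem_ideal_of_seq s j : (j < size s)%N -> ideal_of_seq s s`_j.
Proof.
move=> lt_j; apply/ideal_of_seqP; exists (fun k => (k == j)%:R).
rewrite (bigD1 (Ordinal lt_j)) //= eqxx mul1r big1 ?addr0 // => i neq_ij.
suff /negbTE -> : val i != j by rewrite mul0r.
by apply: contra neq_ij => /eqP eq_ij; apply/eqP/val_inj.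
Qed.

Lemma principal_ideal_unit {a : R} : is_unit a -> principal_ideal a = setT.
Proof.
move=> [b ab1]; apply/seteqP; split => // y _.
by apply/ideal_of_seqP; exists (fun=> y * b); rewrite big_ord1 -mulrA [b * _]mulrC ab1 mulr1.
Qed.

Lemma ideal_of_seq_subr a : ideal_of_seq [:: a; 1 - a] = setT.
Proof.
apply/seteqP; split => // y _; apply/ideal_of_seqP; exists (fun=> y).
by rewrite big_ord_recl big_ord1 /= -mulrDr addrC subrK mulr1.
Qed.

End Ideals.

Lemma is_unit_rmorph (R S : comPzRingType) (f : {rmorphism R -> S}) (a : R) :
  is_unit a -> is_unit (f a).
Proof. by move=> [b ab1]; exists (f b); rewrite -rmorphM ab1 rmorph1. Qed.

Lemma ideal_ext_of_seq (R S : comPzRingType) (f : {rmorphism R -> S}) (s : seq R) :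
  ideal_ext f (ideal_of_seq s) = ideal_of_seq (map f s).
Proof.
apply/seteqP; split => y /=.
- move=> [n [c [a [Ia ->]]]].
  have [d Da] := @boolp.choice 'I_n (nat -> R)
    (fun i d => a i = \sum_(j < size s) d j * s`_j)
    (fun i => proj1 (ideal_of_seqP s (a i)) (Ia i)).
  apply/ideal_of_seqP; exists (fun j => \sum_(i < n) c i * f (d i j)).
  rewrite size_map.
  under eq_bigr => i _ do rewrite Da rmorph_sum mulr_sumr.
  rewrite exchange_big /=; apply: eq_bigr => j _.
  rewrite mulr_suml (nth_map 0) //; apply: eq_bigr => i _.
  by rewrite rmorphM mulrA.
- move=> /ideal_of_seqP [c ->].
  exists (size s), (fun j => c j), (fun j => s`_(val j)); split.
  + by move=> i; apply: mem_ideal_of_seq (ltn_ord i).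
  + by rewrite size_map; apply: eq_bigr => i _; rewrite (nth_map 0).
Qed.

Lemma germ_unit_resE {X : topologicalType} {O : sheaf X} {U W : set X}
    (WU : W `<=` U) (s : sec O U) {x : X} :
  open U -> open W -> W x -> germ_unit x (res O WU s) <-> germ_unit x s.
Proof.
move=> oU oW Wx; split.
- move=> [V [VW [oV Vx unit_s]]]; exists V, (subset_trans VW WU); split => //.
  by rewrite -(res_comp WU VW).
- move=> [V [VU [oV Vx unit_s]]].
  have VWV : V `&` W `<=` V by move=> ? [].
  have VWW : V `&` W `<=` W by move=> ? [].
  have oVW : open (V `&` W) by apply: openI.
  exists (V `&` W), VWW; split => //.
  rewrite (res_comp _ _ (subset_trans VWV VU)) // -(res_comp VU VWV) //.
  exact: is_unit_rmorph.
Qed.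

Section ASchemeSupport.
Context {X : topologicalType} {O : sheaf X} {beta : support_data O}.
Hypothesis HX : is_AScheme beta.

Lemma AScheme_qc_nbhs {U : set X} {x : X} :
  open U -> U x -> exists W, [/\ qc_open W, W x & W `<=` U].
Proof. by case: HX => -[_ _ _ qc_basis] _; apply: qc_basis. Qed.

Lemma AScheme_support_setT (U : set X) : qc_open U -> beta U setT = set0.
Proof. by case: HX => _ [_ [_ [_ [_ [_ [_ [beta_setT _]]]]]]]; apply: beta_setT. Qed.

Lemma support_principalE {U : set X} (a : sec O U) {x : X} : qc_open U ->
  beta U (principal_ideal a) x <-> U x /\ ~ germ_unit x a.
Proof.
have [_ [Ccpt_beta [_ [beta_res [_ [_ [_ [_ reflect_loc]]]]]]]] := HX.
move=> qU; have fg_a : fg_ideal (principal_ideal a) by exists [:: a].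
have [sub_beta oUD qcUD] := Ccpt_beta U _ qU fg_a.
split.
- move=> beta_x; split; first exact: sub_beta.
  move=> [V [VU [oV Vx unit_a]]].
  have [W [qW Wx WV]] := AScheme_qc_nbhs oV Vx.
  have WU := subset_trans WV VU.
  have unit_aW : is_unit (res O WU a).
    by rewrite -(res_comp VU WV) //; [apply: is_unit_rmorph | case: qU | case: qW].
  have := beta_res U W WU _ qU qW fg_a.
  rewrite ideal_ext_of_seq /= -/(principal_ideal _) (principal_ideal_unit unit_aW).
  rewrite AScheme_support_setT // => eq0.
  by have : (beta U (principal_ideal a) `&` W) x by []; rewrite -eq0.
- move=> [Ux not_unit]; apply: boolp.contrapT => beta_x; apply: not_unit.
  have DU : U `\` beta U (principal_ideal a) `<=` U by move=> ? [].
  exists _, DU; split => //.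
  by apply: reflect_loc => // y beta_y; split; [exact: sub_beta | case].
Qed.

Lemma support_of_seqE {U : set X} (s : seq (sec O U)) {x : X} : qc_open U ->
  beta U (ideal_of_seq s) x <->
  U x /\ (forall i, (i < size s)%N -> ~ germ_unit x s`_i).
Proof.
have [_ [_ [_ [_ [beta_add [_ [beta0 _]]]]]]] := HX.
move=> qU; elim: s => [|a s IH].
  by rewrite ideal_of_seq_nil beta0 //; split => [|[]].
have fg_a : fg_ideal (principal_ideal a) by exists [:: a].
rewrite ideal_of_seq_cons beta_add //; last by exists s.
split.
- move=> [/(support_principalE _ qU) [Ux na] /IH [_ ns]].
  by split => // -[|i] //=; apply: ns.
- move=> [Ux n]; split.
  + by apply/support_principalE => //; split => //; apply: (n 0%N).
  + by apply/IH; split => // i; apply: (n i.+1).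
Qed.

Lemma AScheme_locally_ringed : locally_ringed O.
Proof.
have [_ [_ [_ [_ [_ [_ [beta0 _]]]]]]] := HX.
move=> x; split.
- move=> U oU Ux eq10.
  have [W [qW Wx WU]] := AScheme_qc_nbhs oU Ux.
  have eq10W : (1 : sec O W) = 0 by rewrite -(rmorph1 (res O WU)) eq10 rmorph0.
  have zeroT : [set 0 : sec O W] = setT.
    by apply/seteqP; split => // y _ /=; rewrite -[y]mulr1 eq10W mulr0.
  by move: Wx; rewrite -(beta0 W qW) zeroT AScheme_support_setT.
- move=> U s oU Ux.
  have [W [qW Wx WU]] := AScheme_qc_nbhs oU Ux.
  have oW := qW.1.
  have : ~ beta W (ideal_of_seq [:: res O WU s; 1 - res O WU s]) x.
    by rewrite ideal_of_seq_subr AScheme_support_setT.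
  rewrite support_of_seqE // -(rmorph1 (res O WU)) -rmorphB.
  move=> no_unit; have [|not_unit_s] := boolp.pselect (germ_unit x s); [by left | right].
  apply: boolp.contrapT => not_unit_1s; apply: no_unit.
  by split => // -[|[|i]] //= _; rewrite germ_unit_resE.
Qed.

End ASchemeSupport.

Section AMorphisms.
Context {X Y : topologicalType} {OX : sheaf X} {OY : sheaf Y}.
Context {betaX : support_data OX} {betaY : support_data OY}.
Context {f : X -> Y} {fs : sheaf_map OX OY f}.
Hypotheses (HX : is_AScheme betaX) (HY : is_AScheme betaY).
Hypothesis Hf : ringed_morph fs.

Let open_preimage {V : set Y} : open V -> open (f @^-1` V).
Proof. by case: Hf => /continuousP f_open _ _; apply: f_open. Qed.

Let qc_open_preimage {V : set Y} : qc_open V -> qc_open (f @^-1` V).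
Proof. by case: Hf => _ qc_f _ [oV qcV]; split; [apply: open_preimage | apply: qc_f]. Qed.

Lemma germ_unit_comap {V : set Y} (s : sec OY V) {x : X} :
  open V -> germ_unit (f x) s -> germ_unit x (fs V s).
Proof.
case: Hf => _ _ fs_res oV [V' [V'V [oV' V'fx unit_s]]].
exists _, (preimage_subset V'V); split => //; first exact: open_preimage.
by rewrite fs_res //; apply: is_unit_rmorph.
Qed.

Lemma A_morph_local_on_stalks : A_morph_cond betaX betaY fs -> local_on_stalks fs.
Proof.
case: Hf => _ _ fs_res HA x V s oV Vfx unit_fs.
have [V0 [qV0 V0fx V0V]] := AScheme_qc_nbhs HY oV Vfx.
have oV0 := qV0.1.
rewrite -(germ_unit_resE V0V _ oV oV0 V0fx).
have unit_fs0 : germ_unit x (fs V0 (res OY V0V s)).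
  by rewrite -fs_res // germ_unit_resE //; apply: open_preimage.
have := HA V0 _ qV0 (ex_intro _ [:: res OY V0V s] erefl).
rewrite ideal_ext_of_seq /= => supp_comap.
have : ~ betaX (f @^-1` V0) (principal_ideal (fs V0 (res OY V0V s))) x.
  by move/(support_principalE HX _ (qc_open_preimage qV0)) => -[_]; apply.
rewrite [betaX _ _]supp_comap /= (support_principalE HY _ qV0).
move=> no_supp; apply: boolp.contrapT => not_unit; exact: no_supp (conj V0fx not_unit).
Qed.

Lemma local_on_stalks_A_morph : local_on_stalks fs -> A_morph_cond betaX betaY fs.
Proof.
move=> Hloc V _ qV [s ->]; rewrite ideal_ext_of_seq.
have qfV := qc_open_preimage qV.
apply/seteqP; split => x /=.
- move/(support_of_seqE HX _ qfV) => -[Vfx no_unit].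
  apply/(support_of_seqE HY _ qV); split => // i lt_i unit_si.
  apply: (no_unit i); first by rewrite size_map.
  by rewrite (nth_map 0) //; apply: germ_unit_comap qV.1 unit_si.
- move/(support_of_seqE HY _ qV) => -[Vfx no_unit].
  apply/(support_of_seqE HX _ qfV); split => // i; rewrite size_map => lt_i unit_fsi.
  by apply: (no_unit i lt_i); apply: Hloc qV.1 Vfx _; rewrite -(nth_map 0 0).
Qed.

End AMorphisms.

Theorem proposition2p1 :
  (forall (X : topologicalType) (O : sheaf X) (beta : support_data O),
      is_AScheme beta -> locally_ringed O) /\
  (forall (X Y : topologicalType) (OX : sheaf X) (OY : sheaf Y)
      (betaX : support_data OX) (betaY : support_data OY)
      (f : X -> Y) (fs : sheaf_map OX OY f),
      is_AScheme betaX -> is_AScheme betaY -> ringed_morph fs ->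
      (A_morph_cond betaX betaY fs <-> local_on_stalks fs)).
Proof.
split=> [X O beta | X Y OX OY betaX betaY f fs HX HY Hf].
  exact: AScheme_locally_ringed.
split; [exact: A_morph_local_on_stalks HX HY Hf | exact: local_on_stalks_A_morph HX HY Hf].
Qed.
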